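(* Let $q\in\mathbb{C}\setminus\{0\}$ and $n\ge 1$. Then $G_{n+1}$ is spanned by elements of the form $a\chi b$ with $a,b\in G_n$ and $\chi\in\{1,\,t_n,\,v_{n+1},\,v_{n+1}t_n\}$. Moreover, $G_{n+1}[0]$ is spanned by elements of the form $a\chi b$ with $a,b\in G_n[0]$ and $\chi\in\{1,\,t_n,\,e_n,\,e_nt_n\}$, where $e_n=v_nv_{n+1}$.
   Context: For $q\in\mathbb{C}\setminus\{0\}$ the Hecke–Clifford algebra $G_n$ is the complex algebra generated by $t_1,\dots,t_{n-1}$ and $v_1,\dots,v_n$ subject to: the braid relations $t_jt_{j+1}t_j=t_{j+1}t_jt_{j+1}$, $t_it_j=t_jt_i$ for $|i-j|\ge2$; the quadratic relation $t_j-t_j^{-1}=q-q^{-1}$; the Clifford relations $v_jv_k+v_kv_j=2\delta_{jk}$; and the mixed relations $t_jv_j=v_{j+1}t_j$, $t_jv_{j+1}=v_jt_j-(q-q^{-1})(v_j-v_{j+1})$, $t_jv_l=v_lt_j$ for $l\neq j,j+1$. The map $v_j\mapsto -v_j$, $t_j\mapsto t_j$ defines an automorphism $\alpha$ of order two; $G_n[0]$ denotes its fixed-point subalgebra (the even part). $G_n$ is regarded as a subalgebra of $G_{n+1}$ via the obvious map on generators (and hence $G_n[0]\subset G_{n+1}[0]$). *)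

From HB Require Import structures.
From mathcomp Require Import all_boot all_order all_algebra.
From mathcomp Require Import reals.
From mathcomp Require Import complex.
Set Implicit Arguments. Unset Strict Implicit. Unset Printing Implicit Defensive.
Import Order.TTheory GRing.Theory Num.Theory.
Local Open Scope ring_scope.

Definition Cplx (R : realType) : fieldType := (R[i])%C.

Section HC.
Variables (K : pzRingType) (A : algType K).

Inductive gen_alg (S : A -> Prop) : A -> Prop :=
| gen_alg_gen x : S x -> gen_alg S x
| gen_alg_one : gen_alg S 1
| gen_alg_add x y : gen_alg S x -> gen_alg S y -> gen_alg S (x + y)
| gen_alg_scale (c : K) x : gen_alg S x -> gen_alg S (c *: x)
| gen_alg_mul x y : gen_alg S x -> gen_alg S y -> gen_alg S (x * y).

Inductive spanned (P : A -> Prop) : A -> Prop :=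
| spanned0 : spanned P 0
| spanned_comb (c : K) x y : P x -> spanned P y -> spanned P (c *: x + y).

Definition HC_gens (m : nat) (t v : nat -> A) (x : A) : Prop :=
  (exists2 j, (1 <= j < m)%N & x = t j) \/ (exists2 j, (1 <= j <= m)%N & x = v j).

(* The quadratic relation
   t - t^{-1} = q - q^{-1} is written in the equivalent form
   t^2 = (q - q^{-1}) t + 1 (which makes t invertible with
   t^{-1} = t - (q - q^{-1})). *)
Definition HC_relations (F : fieldType) (B : algType F) (m : nat) (q : F)
    (t v : nat -> B) : Prop :=
  (forall j, (1 <= j)%N -> (j.+1 < m)%N ->
         t j * t j.+1 * t j = t j.+1 * t j * t j.+1) /\
      (forall i j, (1 <= i < m)%N -> (1 <= j < m)%N -> (j.+1 < i)%N || (i.+1 < j)%N ->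
         t i * t j = t j * t i) /\
      (forall j, (1 <= j < m)%N -> t j * t j = (q - q^-1) *: t j + 1) /\
      (forall j k, (1 <= j <= m)%N -> (1 <= k <= m)%N ->
         v j * v k + v k * v j = (if j == k then 2%:R else 0)) /\
      (forall j, (1 <= j < m)%N -> t j * v j = v j.+1 * t j) /\
      (forall j, (1 <= j < m)%N ->
         t j * v j.+1 = v j * t j - (q - q^-1) *: (v j - v j.+1)) /\
      (forall j l, (1 <= j < m)%N -> (1 <= l <= m)%N -> l != j -> l != j.+1 ->
         t j * v l = v l * t j).
End HC.

From HB Require Import structures.
From mathcomp Require Import all_boot all_order all_algebra.
From mathcomp Require Import reals complex.
From mathcomp Require Import zify.
Set Implicit Arguments. Unset Strict Implicit. Unset Printing Implicit Defensive.
Import GRing.Theory Num.Theory.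
Local Open Scope ring_scope.

(* Write T = t_n, U = v_n, V = v_(n+1). The span W of the a chi b contains 1
   and is a left G_n-module, so W = G_(n+1) as soon as W T and W V lie in W.
   By induction G_n is spanned by the c chi' d with c, d in G_(n-1) and
   chi' in {1, t_(n-1), U, U t_(n-1)}; as G_(n-1) commutes with T, and with V
   up to the parity automorphism, this leaves finitely many products
   chi chi' T and chi chi' V, which the relations bring back into W.
   For the even part, apply the averaging projection (x + alpha x)/2 to such
   a spanning expression after splitting a and b into alpha-eigenvectors:
   the surviving terms have even total parity, and inserting U U = 1 next to
   the odd factors rewrites each as even * {1, T, U V, U V T} * even. *)

Section Span.
Variables (K : pzRingType) (A : algType K).
Implicit Types (P Q S : A -> Prop) (x y : A).

Lemma spanned_mem P x : P x -> spanned P x.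
Proof.
by move=> Px; rewrite -[x]addr0 -[x]scale1r; apply: spanned_comb => //; apply: spanned0.
Qed.

Lemma spannedD P x y : spanned P x -> spanned P y -> spanned P (x + y).
Proof.
elim=> [|c x0 y0 Px _ IH] Py; first by rewrite add0r.
by rewrite -addrA; apply: spanned_comb => //; apply: IH.
Qed.

Lemma spannedZ P c x : spanned P x -> spanned P (c *: x).
Proof.
elim=> [|d x0 y0 Px _ IH]; first by rewrite scaler0; apply: spanned0.
by rewrite scalerDr scalerA; apply: spanned_comb.
Qed.

Lemma spannedN P x : spanned P x -> spanned P (- x).
Proof. by rewrite -scaleN1r; apply: spannedZ. Qed.

Lemma spannedB P x y : spanned P x -> spanned P y -> spanned P (x - y).
Proof. by move=> Px Py; apply: spannedD => //; apply: spannedN. Qed.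

Lemma spanned_linear P Q (f : A -> A) : linear f ->
  (forall x, P x -> spanned Q (f x)) -> forall x, spanned P x -> spanned Q (f x).
Proof.
move=> f_lin fPQ x; elim=> [|c x0 y0 Px _ IH]; last first.
  by rewrite f_lin; apply: spannedD => //; apply: spannedZ; apply: fPQ.
have -> : f 0 = 0.
  by apply: (@addrI _ (f 0)); rewrite addr0 -{1}[f 0]scale1r -f_lin scale1r addr0.
exact: spanned0.
Qed.

Lemma gen_alg_mono S S' : (forall x, S x -> S' x) ->
  forall x, gen_alg S x -> gen_alg S' x.
Proof.
move=> SS' x; elim=> {x} [x /SS'|||c x _|x y _ Gx _]; first exact: gen_alg_gen.
- exact: gen_alg_one.
- by move=> x y _ Gx _ Gy; apply: gen_alg_add.
- exact: gen_alg_scale.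
- exact: gen_alg_mul.
Qed.

Lemma gen_algN S x : gen_alg S x -> gen_alg S (- x).
Proof. by rewrite -scaleN1r; apply: gen_alg_scale. Qed.

Lemma spanned_gen_alg S P : spanned P 1 ->
  (forall g y, S g -> P y -> spanned P (y * g)) ->
  forall x, gen_alg S x -> spanned P x.
Proof.
move=> P1 PS.
suff PM x : gen_alg S x -> forall y, spanned P y -> spanned P (y * x).
  by move=> x /PM /(_ 1 P1); rewrite mul1r.
elim=> {x} [g Sg||x y _ IHx _ IHy|c x _ IH|x y _ IHx _ IHy] z Pz.
- apply: (spanned_linear (f := fun y => y * g)) Pz => [c x y|y]; last exact: PS.
  by rewrite mulrDl -scalerAl.
- by rewrite mulr1.
- by rewrite mulrDr; apply: spannedD; [apply: IHx | apply: IHy].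
- by rewrite -scalerAr; apply: spannedZ; apply: IH.
- by rewrite mulrA; apply: IHy; apply: IHx.
Qed.

Definition bimod (B : A -> Prop) (X : seq A) : A -> Prop :=
  spanned (fun y => exists a b chi, [/\ B a, B b, chi \in X & y = a * chi * b]).

Lemma bimod_mem B X a chi b : B a -> B b -> chi \in X -> bimod B X (a * chi * b).
Proof. by move=> Ba Bb Xchi; apply: spanned_mem; exists a, b, chi. Qed.

Variables (S : A -> Prop) (X : seq A).
Local Notation B := (gen_alg S).

Lemma bimod_chi chi : chi \in X -> bimod B X chi.
Proof.
move=> Xchi; rewrite -[chi]mul1r -[_ * _]mulr1.
by apply: bimod_mem => //; apply: gen_alg_one.
Qed.

Lemma bimodMl a x : B a -> bimod B X x -> bimod B X (a * x).
Proof.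
move=> Ba; apply: (spanned_linear (f := fun x => a * x)) => [c y z|].
  by rewrite mulrDr scalerAr.
move=> _ [a' [b [chi [Ba' Bb Xchi ->]]]].
by rewrite !mulrA; apply: bimod_mem => //; apply: gen_alg_mul.
Qed.

Lemma bimodMr b x : B b -> bimod B X x -> bimod B X (x * b).
Proof.
move=> Bb; apply: (spanned_linear (f := fun x => x * b)) => [c y z|].
  by rewrite mulrDl scalerAl.
move=> _ [a [b' [chi [Ba Bb' Xchi ->]]]].
by rewrite -mulrA; apply: bimod_mem => //; apply: gen_alg_mul.
Qed.

End Span.

Section HeckeClifford.
Variables (F : fieldType) (A : algType F) (N : nat) (q : F) (t v : nat -> A).
Hypothesis two_neq0 : (2%:R : F) != 0.
Hypothesis rel : HC_relations N q t v.
Local Notation G m := (gen_alg (HC_gens m t v)).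

Lemma t_braid j : (1 <= j)%N -> (j.+1 < N)%N ->
  t j * t j.+1 * t j = t j.+1 * t j * t j.+1.
Proof. by have [braid _] := rel; apply: braid. Qed.

Lemma t_comm i j : (1 <= i < N)%N -> (1 <= j < N)%N -> (j.+1 < i)%N || (i.+1 < j)%N ->
  t i * t j = t j * t i.
Proof. by have [_ [tC _]] := rel; apply: tC. Qed.

Lemma t_sqr j : (1 <= j < N)%N -> t j * t j = (q - q^-1) *: t j + 1.
Proof. by have [_ [_ [tt _]]] := rel; apply: tt. Qed.

Lemma v_sqr j : (1 <= j <= N)%N -> v j * v j = 1.
Proof.
have [_ [_ [_ [vv _]]]] := rel => jN; apply: (scalerI two_neq0).
by rewrite !scaler_nat mulr2n vv // eqxx.
Qed.

Lemma v_anticomm i j : (1 <= i <= N)%N -> (1 <= j <= N)%N -> i != j ->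
  v i * v j = - (v j * v i).
Proof.
have [_ [_ [_ [vv _]]]] := rel => iN jN ij.
by apply/eqP; rewrite -addr_eq0 vv // (negPf ij).
Qed.

Lemma t_v j : (1 <= j < N)%N -> t j * v j = v j.+1 * t j.
Proof. by have [_ [_ [_ [_ [tv _]]]]] := rel; apply: tv. Qed.

Lemma t_vS j : (1 <= j < N)%N ->
  t j * v j.+1 = v j * t j - (q - q^-1) *: (v j - v j.+1).
Proof. by have [_ [_ [_ [_ [_ [tvS _]]]]]] := rel; apply: tvS. Qed.

Lemma tv_comm j l : (1 <= j < N)%N -> (1 <= l <= N)%N -> l != j -> l != j.+1 ->
  t j * v l = v l * t j.
Proof. by have [_ [_ [_ [_ [_ [_ tvC]]]]]] := rel; apply: tvC. Qed.

Lemma G_t m j : (1 <= j < m)%N -> G m (t j).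
Proof. by move=> jm; apply: gen_alg_gen; left; exists j. Qed.

Lemma G_v m j : (1 <= j <= m)%N -> G m (v j).
Proof. by move=> jm; apply: gen_alg_gen; right; exists j. Qed.

Lemma G_mono m m' x : (m <= m')%N -> G m x -> G m' x.
Proof.
by move=> mm'; apply: gen_alg_mono => _ [[j jm ->]|[j jm ->]];
  [left | right]; exists j => //; lia.
Qed.

Lemma G0_central c y : G 0 c -> c * y = y * c.
Proof.
elim=> {c} [g [[j jm _]|[j jm _]]|||c x _ IH|x z _ IHx _ IHz]; try lia.
- by rewrite mul1r mulr1.
- by move=> x z _ IHx _ IHz; rewrite mulrDl mulrDr IHx IHz.
- by rewrite -scalerAl -scalerAr IH.
- by rewrite -mulrA IHz mulrA IHx mulrA.
Qed.

Definition chis k := [:: 1; t k.+1; v k.+2; v k.+2 * t k.+1].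

Section Layer.
Variable k : nat.
Hypothesis kN : (k.+1 < N)%N.
Local Notation S := (t k).
Local Notation T := (t k.+1).
Local Notation U := (v k.+1).
Local Notation V := (v k.+2).
Local Notation W := (bimod (G k.+1) (chis k)).

Let cq := q - q^-1.
Let T_sqr : T * T = cq *: T + 1. Proof. by apply: t_sqr; lia. Qed.
Let TU : T * U = V * T. Proof. by apply: t_v; lia. Qed.
Let TV : T * V = U * T - cq *: (U - V). Proof. by apply: t_vS; lia. Qed.
Let V_sqr : V * V = 1. Proof. by apply: v_sqr; lia. Qed.
Let VU : V * U = - (U * V). Proof. by apply: v_anticomm; lia. Qed.
Let GU : G k.+1 U. Proof. by apply: G_v; lia. Qed.

Lemma lower_commute_T c : G k c -> c * T = T * c.
Proof.
elim=> {c} [_ [[j jk ->]|[j jk ->]]|||c x _ IH|x y _ IHx _ IHy].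
- by apply: t_comm; lia.
- by symmetry; apply: tv_comm; lia.
- by rewrite mul1r mulr1.
- by move=> x y _ IHx _ IHy; rewrite mulrDl mulrDr IHx IHy.
- by rewrite -scalerAl -scalerAr IH.
- by rewrite -mulrA IHy mulrA IHx mulrA.
Qed.

(* [c'] is the image of [c] under the parity automorphism [v_j |-> - v_j]. *)
Lemma lower_twist_V c : G k c ->
  exists2 c', G k c' & c * V = V * c' /\ V * c = c' * V.
Proof.
elim=> {c} [g [[j jk ->]|[j jk ->]]||||].
- exists (t j); first by apply: G_t.
  have tjV : t j * V = V * t j by apply: tv_comm; lia.
  by split.
- exists (- v j); first by apply/gen_algN/G_v.
  have VvJ : V * v j = - (v j * V) by apply: v_anticomm; lia.
  by rewrite mulrN mulNr VvJ opprK.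
- by exists 1; [apply: gen_alg_one | rewrite mul1r mulr1].
- move=> x y _ [x' Gx' [xV Vx]] _ [y' Gy' [yV Vy]].
  exists (x' + y'); first exact: gen_alg_add.
  by rewrite !mulrDl !mulrDr xV Vx yV Vy.
- move=> c x _ [x' Gx' [xV Vx]]; exists (c *: x'); first exact: gen_alg_scale.
  by rewrite -!scalerAl -!scalerAr xV Vx.
- move=> x y _ [x' Gx' [xV Vx]] _ [y' Gy' [yV Vy]].
  exists (x' * y'); first exact: gen_alg_mul.
  by rewrite -!mulrA yV -Vy !mulrA xV Vx.
Qed.

Lemma chis_lower_commute chi c : chi \in chis k -> G k c ->
  exists2 c', G k c' & chi * c = c' * chi.
Proof.
rewrite !inE => /or4P [] /eqP -> Gc.
- by exists c; rewrite ?mul1r ?mulr1.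
- by exists c; rewrite ?lower_commute_T.
- by have [c' Gc' [_ Vc]] := lower_twist_V Gc; exists c'.
- have [c' Gc' [_ Vc]] := lower_twist_V Gc; exists c' => //.
  by rewrite -mulrA -lower_commute_T // mulrA Vc mulrA.
Qed.

Lemma lower_commute_gen g d : g \in [:: T; V] -> G k d ->
  exists2 d', G k d' & d * g = g * d'.
Proof.
rewrite !inE => /orP [] /eqP -> Gd; first by exists d; rewrite ?lower_commute_T.
by have [d' Gd' [dV _]] := lower_twist_V Gd; exists d'.
Qed.

Section LowerLayer.
Variable L : seq A.
Hypothesis G_lower : forall b, G k.+1 b -> bimod (G k) L b.
Hypothesis L_mul_gen : forall chi chi' g,
  chi \in chis k -> chi' \in L -> g \in [:: T; V] -> W (chi * chi' * g).

Lemma chis_G_mul_gen chi b g : chi \in chis k -> g \in [:: T; V] -> G k.+1 b ->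
  W (chi * b * g).
Proof.
move=> chi_k g_TV /G_lower.
apply: (spanned_linear (f := fun b => chi * b * g)) => [c x y|].
  by rewrite mulrDr mulrDl -scalerAr -scalerAl.
move=> _ [c [d [chi' [Gc Gd chi'L ->]]]].
have [c' Gc' chi_c] := chis_lower_commute chi_k Gc.
have [d' Gd' d_g] := lower_commute_gen g_TV Gd.
have -> : chi * (c * chi' * d) * g = c' * (chi * chi' * g) * d'.
  by rewrite !mulrA chi_c -(mulrA _ d g) d_g !mulrA.
change (W (c' * (chi * chi' * g) * d')).
apply: bimodMr; first exact: G_mono Gd'.
apply: bimodMl; first exact: G_mono Gc'.
exact: L_mul_gen.
Qed.

Lemma G_bimod_chis_step x : G k.+2 x -> W x.
Proof.
apply: spanned_gen_alg; first by apply: bimod_chi; rewrite inE eqxx.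
move=> g _ [[j jk ->]|[j jk ->]] [a [b [chi [Ga Gb chi_k ->]]]].
- have [jk'|->] : (j < k.+1)%N \/ j = k.+1 by lia.
    rewrite -mulrA; apply: bimod_mem => //.
    by apply: gen_alg_mul => //; apply: G_t; lia.
  rewrite -2!mulrA [chi * _]mulrA; apply: bimodMl => //.
  by apply: chis_G_mul_gen => //; rewrite inE eqxx.
- have [jk'|->] : (j < k.+2)%N \/ j = k.+2 by lia.
    rewrite -mulrA; apply: bimod_mem => //.
    by apply: gen_alg_mul => //; apply: G_v; lia.
  rewrite -2!mulrA [chi * _]mulrA; apply: bimodMl => //.
  by apply: chis_G_mul_gen => //; rewrite !inE eqxx orbT.
Qed.

End LowerLayer.

Let chis1 : 1 \in chis k. Proof. by rewrite inE eqxx. Qed.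
Let chisT : T \in chis k. Proof. by rewrite !inE eqxx orbT. Qed.
Let chisV : V \in chis k. Proof. by rewrite !inE eqxx !orbT. Qed.
Let chisVT : V * T \in chis k. Proof. by rewrite !inE eqxx !orbT. Qed.

Lemma chis_mul_gen chi g : chi \in chis k -> g \in [:: T; V] -> W (chi * g).
Proof.
have WU : W U by rewrite -[U]mulr1; apply: bimodMl => //; apply: bimod_chi.
rewrite !inE => /or4P [] /eqP -> /orP [] /eqP ->; rewrite ?mul1r.
- exact: bimod_chi.
- exact: bimod_chi.
- by rewrite T_sqr; apply: spannedD; [apply/spannedZ/bimod_chi | apply: bimod_chi].
- rewrite TV; apply: spannedB; first by apply: bimodMl => //; apply: bimod_chi.
  by apply/spannedZ/spannedB => //; apply: bimod_chi.
- exact: bimod_chi.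
- by rewrite V_sqr; apply: bimod_chi.
- rewrite -mulrA T_sqr mulrDr mulr1 -scalerAr.
  by apply: spannedD; [apply/spannedZ/bimod_chi | apply: bimod_chi].
- have -> : V * T * V = - (U * (V * T)) - cq *: (- (U * V) - 1).
    by rewrite -mulrA TV mulrBr -scalerAr mulrBr [V * (U * T)]mulrA VU V_sqr mulNr mulrA.
  apply: spannedB; first by apply/spannedN/bimodMl => //; apply: bimod_chi.
  apply/spannedZ/spannedB; last exact: bimod_chi.
  by apply/spannedN/bimodMl => //; apply: bimod_chi.
Qed.

Lemma chis_mulU chi : chi \in chis k ->
  exists a chi', [/\ G k.+1 a, chi' \in chis k & chi * U = a * chi'].
Proof.
rewrite !inE => /or4P [] /eqP ->.
- by exists U, 1; rewrite mul1r mulr1.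
- by exists 1, (V * T); split; [apply: gen_alg_one | | rewrite mul1r].
- by exists (- U), V; split; [apply: gen_algN | | rewrite VU mulNr].
- exists 1, T; split; [apply: gen_alg_one | | ] => //.
  by rewrite -mulrA TU mulrA V_sqr.
Qed.

Lemma chis_mul_v_gen chi chi' g : chi \in chis k -> chi' \in [:: 1; U] ->
  g \in [:: T; V] -> W (chi * chi' * g).
Proof.
move=> chi_k + g_TV; rewrite !inE => /orP [] /eqP ->.
  by rewrite mulr1; apply: chis_mul_gen.
have [a [chi'' [Ga chi''_k ->]]] := chis_mulU chi_k.
by rewrite -mulrA; apply: bimodMl => //; apply: chis_mul_gen.
Qed.

Section LayerAboveOne.
Hypothesis k_gt0 : (0 < k)%N.

Let VS : V * S = S * V. Proof. by symmetry; apply: tv_comm; lia. Qed.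
Let STS : S * T * S = T * S * T. Proof. by apply: t_braid; lia. Qed.
Let GS : G k.+1 S. Proof. by apply: G_t; lia. Qed.

Lemma chis_mulS_gen chi g : chi \in chis k -> g \in [:: T; V] -> W (chi * S * g).
Proof.
move=> chi_k; rewrite !inE => /orP [] /eqP ->; last first.
  rewrite -mulrA -VS mulrA; apply: bimodMr => //.
  by apply: chis_mul_gen; rewrite // !inE eqxx orbT.
move: chi_k; rewrite !inE => /or4P [] /eqP ->.
- by rewrite mul1r -[S * T]mulr1; apply: bimod_mem => //; apply: gen_alg_one.
- by rewrite -STS; apply: bimod_mem.
- by rewrite VS -mulrA -[_ * (V * T)]mulr1; apply: bimod_mem => //; apply: gen_alg_one.
- have -> : V * T * S * T = V * (T * S * T) by rewrite !mulrA.
  by rewrite -STS !mulrA VS -[S * V * T]mulrA; apply: bimod_mem.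
Qed.

Lemma chis_mul_chis_gen chi chi' g : chi \in chis k -> chi' \in [:: 1; S; U; U * S] ->
  g \in [:: T; V] -> W (chi * chi' * g).
Proof.
move=> chi_k + g_TV; rewrite !inE => /or4P [] /eqP ->.
- by apply: chis_mul_v_gen => //; rewrite inE eqxx.
- exact: chis_mulS_gen.
- by apply: chis_mul_v_gen => //; rewrite !inE eqxx orbT.
have [a [chi'' [Ga chi''_k chi_U]]] := chis_mulU chi_k.
rewrite mulrA chi_U -!mulrA [chi'' * _]mulrA; apply: bimodMl => //.
exact: chis_mulS_gen.
Qed.

End LayerAboveOne.
End Layer.

Lemma G1_bimod : (1 < N)%N -> forall x, G 1 x -> bimod (G 0) [:: 1; v 1] x.
Proof.
move=> N_gt1; apply: spanned_gen_alg; first by apply: bimod_chi; rewrite inE eqxx.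
move=> g y [[j j1 _]|[j j1 ->]]; first lia.
have -> : j = 1%N by lia.
move=> [a [b [chi [Ga Gb chi1 ->]]]].
rewrite -mulrA (G0_central _ Gb) mulrA -(mulrA a chi).
move: chi1; rewrite !inE => /orP [] /eqP ->.
  by rewrite mul1r; apply: bimod_mem; rewrite // !inE eqxx orbT.
by rewrite v_sqr; [apply: bimod_mem; rewrite // inE eqxx | lia].
Qed.

Theorem G_bimod_chis k : (k.+1 < N)%N ->
  forall x, G k.+2 x -> bimod (G k.+1) (chis k) x.
Proof.
elim: k => [|k IH] kN.
  apply: (G_bimod_chis_step kN (L := [:: 1; v 1])) => //; first exact: G1_bimod.
  exact: chis_mul_v_gen.
apply: (G_bimod_chis_step kN (L := chis k)) => //; first by apply: IH; lia.
by move=> chi chi' g; apply: chis_mul_chis_gen.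
Qed.

Section Parity.
Variable alpha : A -> A.
Hypotheses (alphaD : {morph alpha : x y / x + y})
  (alphaZ : forall c x, alpha (c *: x) = c *: alpha x)
  (alphaM : {morph alpha : x y / x * y}) (alpha1 : alpha 1 = 1)
  (alpha_t : forall j, alpha (t j) = t j) (alpha_v : forall j, alpha (v j) = - v j).
Implicit Types x y : A.

Definition homog (p : bool) x := alpha x = if p then - x else x.

Lemma alphaN x : alpha (- x) = - alpha x.
Proof. by rewrite -scaleN1r alphaZ scaleN1r. Qed.

Lemma homogM p r x y : homog p x -> homog r y -> homog (p (+) r) (x * y).
Proof.
by rewrite /homog alphaM => -> ->; case: p; case: r; rewrite /= ?mulNr ?mulrN ?opprK.
Qed.

Lemma homog1 : homog false 1. Proof. exact: alpha1. Qed.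
Lemma homog_t j : homog false (t j). Proof. exact: alpha_t. Qed.
Lemma homog_v j : homog true (v j). Proof. exact: alpha_v. Qed.

Lemma G_alpha m x : G m x -> G m (alpha x).
Proof.
elim=> {x} [g [[j jm ->]|[j jm ->]]||x y _ Gx _ Gy|c x _ Gx|x y _ Gx _ Gy].
- by rewrite alpha_t; apply: G_t.
- by rewrite alpha_v; apply/gen_algN/G_v.
- by rewrite alpha1; apply: gen_alg_one.
- by rewrite alphaD; apply: gen_alg_add.
- by rewrite alphaZ; apply: gen_alg_scale.
- by rewrite alphaM; apply: gen_alg_mul.
Qed.

Lemma alphaK_G m x : G m x -> alpha (alpha x) = x.
Proof.
elim=> {x} [g [[j jm ->]|[j jm ->]]||x y _ IHx _ IHy|c x _ IH|x y _ IHx _ IHy].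
- by rewrite !alpha_t.
- by rewrite alpha_v alphaN alpha_v opprK.
- by rewrite !alpha1.
- by rewrite !alphaD IHx IHy.
- by rewrite !alphaZ IH.
- by rewrite !alphaM IHx IHy.
Qed.

Let halfD x : (2%:R : F)^-1 *: (x + x) = x.
Proof. by rewrite -mulr2n -scaler_nat scalerA mulVf // scale1r. Qed.

Definition even_part x := (2%:R : F)^-1 *: (x + alpha x).

Lemma even_partD : {morph even_part : x y / x + y}.
Proof. by move=> x y; rewrite /even_part alphaD addrACA scalerDr. Qed.

Lemma even_part_linear : linear even_part.
Proof.
move=> c x y; rewrite /even_part alphaD alphaZ addrACA.
by rewrite !scalerDr !scalerA (mulrC c).
Qed.

Lemma even_part_homog p x : homog p x -> even_part x = if p then 0 else x.
Proof. by rewrite /even_part => ->; case: p; rewrite ?subrr ?scaler0 ?halfD. Qed.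

Lemma G_homog_split m x : G m x ->
  exists x0 x1, [/\ G m x0, homog false x0, G m x1, homog true x1 & x = x0 + x1].
Proof.
move=> Gx; exists (even_part x), ((2%:R : F)^-1 *: (x - alpha x)).
have [Gax alphaKx] := (G_alpha Gx, alphaK_G Gx).
split.
- by apply/gen_alg_scale/gen_alg_add.
- by rewrite /homog /even_part alphaZ alphaD alphaKx addrC.
- by apply/gen_alg_scale/gen_alg_add/gen_algN.
- by rewrite /homog alphaZ alphaD alphaN alphaKx -scalerN opprB.
- by rewrite /even_part -scalerDr addrACA subrr addr0 halfD.
Qed.

Definition even_chis k := [:: 1; t k.+1; v k.+1 * v k.+2; v k.+1 * v k.+2 * t k.+1].
Local Notation G_even m := (fun a => G m a /\ alpha a = a).

Section EvenLayer.
Variable k : nat.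
Hypothesis kN : (k.+1 < N)%N.
Local Notation T := (t k.+1).
Local Notation U := (v k.+1).
Local Notation V := (v k.+2).
Local Notation E := (bimod (G_even k.+1) (even_chis k)).

Let mulUU x : x * U * U = x. Proof. by rewrite -mulrA v_sqr ?mulr1 //; lia. Qed.
Let mulVV x : x * V * V = x. Proof. by rewrite -mulrA v_sqr ?mulr1 //; lia. Qed.
Let mulTU x : x * T * U = x * V * T. Proof. by rewrite -!mulrA t_v //; lia. Qed.
Let mulVU x : x * V * U = - (x * U * V).
Proof. by rewrite -!mulrA v_anticomm ?mulrN //; lia. Qed.

Let even1 : 1 \in even_chis k. Proof. by rewrite inE eqxx. Qed.
Let evenT : T \in even_chis k. Proof. by rewrite !inE eqxx orbT. Qed.
Let evenUV : U * V \in even_chis k. Proof. by rewrite !inE eqxx !orbT. Qed.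
Let evenUVT : U * V * T \in even_chis k. Proof. by rewrite !inE eqxx !orbT. Qed.

Let G_even_mulU a : G k.+1 a -> homog true a -> G_even k.+1 (a * U).
Proof.
move=> Ga ha; split; last exact: (homogM ha (homog_v _)).
by apply: gen_alg_mul => //; apply: G_v; lia.
Qed.

Let G_even_Umul b : G k.+1 b -> homog true b -> G_even k.+1 (U * b).
Proof.
move=> Gb hb; split; last exact: (homogM (homog_v _) hb).
by apply: gen_alg_mul => //; apply: G_v; lia.
Qed.

Lemma bimod_even_part_homog pa pb a chi b : G k.+1 a -> homog pa a ->
  G k.+1 b -> homog pb b -> chi \in chis k -> E (even_part (a * chi * b)).
Proof.
move=> Ga ha Gb hb; rewrite !inE => /or4P [] /eqP ->.
- rewrite (even_part_homog (homogM (homogM ha homog1) hb)).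
  case: pa ha; case: pb hb => hb ha /=; try exact: spanned0.
    have -> : a * 1 * b = a * U * 1 * (U * b) by rewrite !mulrA !mulr1 mulUU.
    by apply: bimod_mem; [apply: G_even_mulU | apply: G_even_Umul |].
  by apply: bimod_mem.
- rewrite (even_part_homog (homogM (homogM ha (homog_t _)) hb)).
  case: pa ha; case: pb hb => hb ha /=; try exact: spanned0.
    have -> : a * T * b = a * U * (U * V * T) * (U * b).
      by rewrite !mulrA mulUU mulTU mulVV.
    by apply: bimod_mem; [apply: G_even_mulU | apply: G_even_Umul |].
  by apply: bimod_mem.
- rewrite (even_part_homog (homogM (homogM ha (homog_v _)) hb)).
  case: pa ha; case: pb hb => hb ha /=; try exact: spanned0.
    have -> : a * V * b = a * U * (U * V) * b by rewrite !mulrA mulUU.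
    by apply: bimod_mem; [apply: G_even_mulU | |].
  have -> : a * V * b = - (a * (U * V) * (U * b)) by rewrite !mulrA mulVU mulNr mulUU opprK.
  by apply/spannedN/bimod_mem; [| apply: G_even_Umul |].
- rewrite (even_part_homog (homogM (homogM ha (homogM (homog_v _) (homog_t _))) hb)).
  case: pa ha; case: pb hb => hb ha /=; try exact: spanned0.
    have -> : a * (V * T) * b = a * U * (U * V * T) * b by rewrite !mulrA mulUU.
    by apply: bimod_mem; [apply: G_even_mulU | |].
  have -> : a * (V * T) * b = a * T * (U * b) by rewrite !mulrA mulTU.
  by apply: bimod_mem; [| apply: G_even_Umul |].
Qed.

Lemma even_part_bimod x : bimod (G k.+1) (chis k) x -> E (even_part x).
Proof.
apply: (spanned_linear even_part_linear) => _ [a [b [chi [Ga Gb chi_k ->]]]].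
have [a0 [a1 [Ga0 ha0 Ga1 ha1 ->]]] := G_homog_split Ga.
have [b0 [b1 [Gb0 hb0 Gb1 hb1 ->]]] := G_homog_split Gb.
rewrite !mulrDl !mulrDr !even_partD.
by do 2 apply: spannedD; apply: bimod_even_part_homog; eassumption.
Qed.

Theorem G_even_bimod x : G k.+2 x -> alpha x = x -> E x.
Proof.
move=> Gx ax; have <- : even_part x = x := even_part_homog (p := false) ax.
exact/even_part_bimod/G_bimod_chis.
Qed.

End EvenLayer.
End Parity.
End HeckeClifford.

Theorem proposition2p15 (R : realType) (q : Cplx R) (n : nat)
    (A : algType (Cplx R)) (t v : nat -> A) :
  q != 0 -> (1 <= n)%N ->
  HC_relations n.+1 q t v ->
  (forall x, gen_alg (HC_gens n.+1 t v) x ->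
     spanned (fun y => exists a b chi,
                [/\ gen_alg (HC_gens n t v) a, gen_alg (HC_gens n t v) b,
                    chi \in [:: 1; t n; v n.+1; v n.+1 * t n] &
                    y = a * chi * b]) x)
  /\
  (forall alpha : A -> A,
     {morph alpha : x y / x + y} ->
     (forall (c : Cplx R) x, alpha (c *: x) = c *: alpha x) ->
     {morph alpha : x y / x * y} -> alpha 1 = 1 ->
     (forall j, alpha (t j) = t j) -> (forall j, alpha (v j) = - v j) ->
     forall x, gen_alg (HC_gens n.+1 t v) x -> alpha x = x ->
       spanned (fun y => exists a b chi,
                  [/\ gen_alg (HC_gens n t v) a /\ alpha a = a,
                      gen_alg (HC_gens n t v) b /\ alpha b = b,
                      chi \in [:: 1; t n; v n * v n.+1; v n * v n.+1 * t n] &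
                      y = a * chi * b]) x).
Proof.
move=> _; case: n => [//|k] _ rel.
have two_neq0 : (2%:R : Cplx R) != 0 by rewrite (pnatr_eq0 (R[i])%C).
split; first exact: (G_bimod_chis two_neq0 rel (ltnSn _)).
by move=> alpha alphaD alphaZ alphaM alpha1 alpha_t alpha_v;
  apply: (G_even_bimod two_neq0 rel alphaD alphaZ alphaM alpha1 alpha_t alpha_v (ltnSn _)).
Qed.
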